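(* Let $U$ be a nonempty set and let $\pi,\sigma$ be partitions of $U$. Let $G(\sigma\Rightarrow\pi)$ be the simple undirected graph with vertex set $U$ in which two distinct elements $u,u'$ are adjacent if and only if $u,u'$ lie in the same block of $\pi$ but in different blocks of $\sigma$. Define the partition $\sigma\Rightarrow\pi$ of $U$ as follows: for each block $B\in\pi$, if there is a block $C\in\sigma$ with $B\subseteq C$, then $B$ is replaced by the singletons $\{u\}$, $u\in B$; otherwise $B$ is kept as a single block. Then the partition of $U$ into the connected components of $G(\sigma\Rightarrow\pi)$ equals $\sigma\Rightarrow\pi$.
   Context: A partition of $U$ is a set of pairwise disjoint nonempty subsets of $U$ (blocks) whose union is $U$. The graph $G(\sigma\Rightarrow\pi)$ arises from labelling each edge $u-u'$ of the complete graph on $U$ with $T_\pi$ if $u,u'$ are in different blocks of $\pi$ and $F_\pi$ otherwise (similarly for $\sigma$) and keeping exactly the edges on which the Boolean conditional $\sigma\supset\pi$ of the two truth values is $F$, i.e. those labelled $T_\sigma,F_\pi$. *)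

(* an arbitrary (possibly infinite) set U is a type T;
   subsets are predicates T -> Prop, and a partition is a set of blocks. *)
From Stdlib Require Import Relations.

Set Implicit Arguments.

Definition subset_of {T : Type} (A B : T -> Prop) : Prop := forall x, A x -> B x.

Definition is_partition {T : Type} (P : (T -> Prop) -> Prop) : Prop :=
  (forall B, P B -> exists x, B x) /\
  (forall B C, P B -> P C -> forall x, B x -> C x -> B = C) /\
  (forall x, exists B, P B /\ B x).

Definition same_block {T : Type} (P : (T -> Prop) -> Prop) (u u' : T) : Prop :=
  exists B, P B /\ B u /\ B u'.

Definition impl_graph {T : Type} (sigma pi : (T -> Prop) -> Prop) (u u' : T) : Prop :=
  u <> u' /\ same_block pi u u' /\ ~ same_block sigma u u'.

Definition components {T : Type} (adj : relation T) : (T -> Prop) -> Prop :=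
  fun C => exists u, C = (fun v => clos_refl_trans T adj u v).

Definition part_impl {T : Type} (sigma pi : (T -> Prop) -> Prop) : (T -> Prop) -> Prop :=
  fun C => exists B, pi B /\
    (((exists D, sigma D /\ subset_of B D) /\ exists u, B u /\ C = (fun v => v = u))
     \/ (~ (exists D, sigma D /\ subset_of B D) /\ C = B)).

(* A path of G(sigma => pi) never leaves a block B of pi.  If B lies inside a
   block of sigma, no edge starts in B, so its points are isolated.  Otherwise
   pick w in B outside the sigma-block D of u in B: every v in B is adjacent to
   u when v is not in D, and adjacent to w (itself adjacent to u) when it is, so
   B is connected. *)
From Stdlib Require Import Relations.
From Stdlib Require Import Classical FunctionalExtensionality PropExtensionality.

Definition in_some_block {T : Type} (P : (T -> Prop) -> Prop) (B : T -> Prop) : Prop :=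
  exists D, P D /\ subset_of B D.

Lemma same_block_sym {T : Type} {P : (T -> Prop) -> Prop} {x y : T} :
  same_block P x y -> same_block P y x.
Proof. intros [B [HB [Bx By]]]. exists B. auto. Qed.

Lemma same_block_iff {T : Type} {P : (T -> Prop) -> Prop} {B : T -> Prop} {x y : T} :
  is_partition P -> P B -> B x -> (same_block P x y <-> B y).
Proof.
  intros [_ [Hdisj _]] HB Bx. split.
  - intros [C [HC [Cx Cy]]]. rewrite (Hdisj B C HB HC x Bx Cx). exact Cy.
  - intro By. exists B. auto.
Qed.

Lemma clos_refl_trans_invariant {T : Type} (r : relation T) (A : T -> Prop) (x y : T) :
  (forall a b, r a b -> A a -> A b) -> clos_refl_trans T r x y -> A x -> A y.
Proof. intros Hr Hxy. induction Hxy; eauto. Qed.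

Lemma clos_refl_trans_stuck {T : Type} (r : relation T) (x y : T) :
  (forall z, ~ r x z) -> clos_refl_trans T r x y -> y = x.
Proof.
  intros Hx Hxy. apply clos_rt_rt1n in Hxy.
  destruct Hxy as [|z y Hxz _]; [reflexivity | exfalso; exact (Hx z Hxz)].
Qed.

Section ImplicationGraph.
Context {T : Type} {pi sigma : (T -> Prop) -> Prop}.
Hypotheses (Hpi : is_partition pi) (Hsigma : is_partition sigma).
Context {B : T -> Prop} {u : T}.
Hypotheses (HB : pi B) (Bu : B u).

Let reach := clos_refl_trans T (impl_graph sigma pi) u.

Lemma impl_graph_in_block (x y : T) :
  B x -> B y -> x <> y -> ~ same_block sigma x y -> impl_graph sigma pi x y.
Proof. intros Bx By Hxy Hs. repeat split; auto. exists B. auto. Qed.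

Lemma reach_in_block (v : T) : reach v -> B v.
Proof.
  intro Hv. apply (clos_refl_trans_invariant (impl_graph sigma pi) B u v); auto.
  intros a b [_ [Hab _]] Ba. exact (proj1 (same_block_iff Hpi HB Ba) Hab).
Qed.

Lemma component_in_some_block :
  in_some_block sigma B -> reach = (fun v => v = u).
Proof.
  intros [D [HD HBD]].
  apply functional_extensionality; intro v. apply propositional_extensionality. split.
  - apply clos_refl_trans_stuck. intros z [_ [Huz Hs]]. apply Hs.
    exists D. split; [exact HD|]. split; apply HBD; [exact Bu|].
    exact (proj1 (same_block_iff Hpi HB Bu) Huz).
  - intros ->. apply rt_refl.
Qed.

Lemma component_not_in_some_block :
  ~ in_some_block sigma B -> reach = B.
Proof.
  intro HnB.
  apply functional_extensionality; intro v. apply propositional_extensionality. split.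
  - apply reach_in_block.
  - intro Bv.
    destruct Hsigma as [_ [_ Hcover]]. destruct (Hcover u) as [D [HD Du]].
    assert (Hw : exists w, B w /\ ~ D w).
    { apply NNPP. intro Hn. apply HnB. exists D. split; [exact HD|].
      intros w Bw. apply NNPP. intro nDw. apply Hn. eauto. }
    destruct Hw as [w [Bw nDw]].
    assert (Hsame : forall x y, D x -> (same_block sigma x y <-> D y))
      by (intros; apply same_block_iff; auto).
    destruct (classic (v = u)) as [-> | Hvu]; [apply rt_refl|].
    destruct (classic (D v)) as [Dv | nDv].
    + apply rt_trans with w; apply rt_step; apply impl_graph_in_block; auto.
      * intros ->. contradiction.
      * rewrite Hsame; auto.
      * intros ->. contradiction.
      * intro Hs. apply same_block_sym in Hs. rewrite Hsame in Hs; auto.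
    + apply rt_step. apply impl_graph_in_block; auto. rewrite Hsame; auto.
Qed.

End ImplicationGraph.

Theorem mainTheorem3 (T : Type) (U_nonempty : inhabited T)
  (pi sigma : (T -> Prop) -> Prop)
  (Hpi : is_partition pi) (Hsigma : is_partition sigma) :
  components (impl_graph sigma pi) = part_impl sigma pi.
Proof.
  pose proof Hpi as [Hnonempty [_ Hcover]].
  apply functional_extensionality; intro C.
  apply propositional_extensionality; split.
  - intros [u ->].
    destruct (Hcover u) as [B [HB Bu]].
    exists B. split; [exact HB|].
    destruct (classic (in_some_block sigma B)) as [Hin | Hin]; [left | right];
      split; auto.
    + exists u. split; [exact Bu|].
      exact (component_in_some_block Hpi HB Bu Hin).
    + exact (component_not_in_some_block Hpi Hsigma HB Bu Hin).
  - intros [B [HB [[Hin [u [Bu ->]]] | [Hin ->]]]].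
    + exists u. symmetry. exact (component_in_some_block Hpi HB Bu Hin).
    + destruct (Hnonempty B HB) as [u Bu].
      exists u. symmetry. exact (component_not_in_some_block Hpi Hsigma HB Bu Hin).
Qed.
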